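(* The metric space $L_\omega$ satisfies $\operatorname{trasdim} L_\omega=\omega$, where $\omega$ is the first infinite ordinal.
   Context: Let $X=\bigsqcup_{i=1}^\infty\mathbb Z^i$ (disjoint union). For $a=(a_1,\dots,a_l)\in\mathbb Z^l$ and $b=(b_1,\dots,b_k)\in\mathbb Z^k$ with $l\le k$, let $a'=(a_1,\dots,a_l,0,\dots,0)\in\mathbb Z^k$, let $c=0$ if $l=k$ and $c=l+(l+1)+\dots+(k-1)$ if $l<k$, and set $d_\infty(a,b)=d_\infty(b,a)=\max\{d(a',b),c\}$, where $d$ is the sup-metric $d(x,y)=\max_j|x_j-y_j|$ on $\mathbb Z^k$. $L_\infty=(X,d_\infty)$, and $L_\omega=\bigcup_{k=1}^\infty(k\mathbb Z)^k\subset L_\infty$ with the restricted metric, where $k\mathbb Z=\{kl:l\in\mathbb Z\}$ and $(k\mathbb Z)^k\subset\mathbb Z^k$. A family $\mathcal A$ of subsets is uniformly bounded if there is $C>0$ with $\operatorname{diam}A\le C$ for all $A\in\mathcal A$; it is $r$-disjoint if $d(A_1,A_2)\ge r$ for all distinct $A_1,A_2\in\mathcal A$. For a set $L$, $\mathrm{Fin}\,L$ is the collection of finite nonempty subsets of $L$. For $M\subset \mathrm{Fin}\,L$ and $\sigma\in\{\emptyset\}\cup\mathrm{Fin}\,L$, $M^\sigma=\{\tau\in\mathrm{Fin}\,L:\sigma\cup\tau\in M,\ \sigma\cap\tau=\emptyset\}$, and $M^a=M^{\{a\}}$. The ordinal $\operatorname{Ord}M$: $\operatorname{Ord}M=0$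 iff $M=\emptyset$; $\operatorname{Ord}M\le\alpha$ iff $\operatorname{Ord}M^a<\alpha$ for every $a\in L$; $\operatorname{Ord}M=\alpha$ iff $\operatorname{Ord}M\le\alpha$ and not $\operatorname{Ord}M<\alpha$; $\operatorname{Ord}M=\infty$ iff $\operatorname{Ord} M\le\alpha$ for no ordinal $\alpha$. For a metric space $(X,d)$, $A(X,d)$ is the set of $\sigma\in\mathrm{Fin}\,\mathbb N$ such that there do NOT exist uniformly bounded families $\mathcal V_i$, $i\in\sigma$, with $\bigcup_{i\in\sigma}\mathcal V_i$ covering $X$ and each $\mathcal V_i$ being $i$-disjoint. Define $\operatorname{trasdim}X=\operatorname{Ord}A(X,d)$, except $\operatorname{trasdim}X=-1$ iff $X$ is bounded. *)

From Stdlib Require Import ZArith Reals List.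
Set Implicit Arguments.

(* A point of Z^k is a list of integers of length k (k >= 1). *)

Definition pad (a : list Z) (k : nat) : list Z := a ++ repeat 0%Z (k - length a).

(* sup-metric on Z^k (lists of equal length) *)
Fixpoint supd (a b : list Z) : Z :=
  match a, b with
  | x :: a', y :: b' => Z.max (Z.abs (x - y)) (supd a' b')
  | _, _ => 0%Z
  end.

Definition cpen (l k : nat) : nat := fold_right plus 0%nat (seq l (k - l)).

Definition dinf (a b : list Z) : Z :=
  let l := length a in let k := length b in
  if (l <=? k)%nat
  then Z.max (supd (pad a k) b) (Z.of_nat (cpen l k))
  else Z.max (supd (pad b l) a) (Z.of_nat (cpen k l)).

(* L_omega = union over k >= 1 of (kZ)^k *)
Definition Lomega : Type :=
  { a : list Z | (0 < length a)%nat /\ Forall (fun x => (Z.of_nat (length a) | x)%Z) a }.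

Definition dLomega (a b : Lomega) : R := IZR (dinf (proj1_sig a) (proj1_sig b)).

Definition FinNE (L : Type) (s : L -> Prop) : Prop :=
  (exists l : list L, forall x, s x <-> In x l) /\ (exists x, s x).

Definition Mpt (L : Type) (M : (L -> Prop) -> Prop) (a : L) : (L -> Prop) -> Prop :=
  fun tau => FinNE tau /\ M (fun x => x = a \/ tau x) /\ ~ tau a.

(* Ord M <= n for a natural number n:
   Ord M <= 0 iff Ord M = 0 iff M is empty;
   Ord M <= n+1 iff Ord M^a < n+1 (i.e. Ord M^a <= n) for every a. *)
Fixpoint OrdLe (L : Type) (M : (L -> Prop) -> Prop) (n : nat) : Prop :=
  match n with
  | O => forall tau, ~ M tau
  | S n' => forall a, OrdLe (Mpt M a) n'
  end.

(* Ord M = omega: Ord M <= omega (every Ord M^a < omega) and not Ord M < omega *)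
Definition OrdEqOmega (L : Type) (M : (L -> Prop) -> Prop) : Prop :=
  (forall a, exists n, OrdLe (Mpt M a) n) /\ ~ (exists n, OrdLe M n).

Definition PN : Type := { n : nat | (0 < n)%nat }.

Definition uniformly_bounded (X : Type) (d : X -> X -> R) (F : (X -> Prop) -> Prop) : Prop :=
  exists C : R, (0 < C)%R /\
    forall A, F A -> forall x y, A x -> A y -> (d x y <= C)%R.

Definition r_disjoint (X : Type) (d : X -> X -> R) (r : R) (F : (X -> Prop) -> Prop) : Prop :=
  forall A1 A2, F A1 -> F A2 -> A1 <> A2 ->
    forall x y, A1 x -> A2 y -> (r <= d x y)%R.

Definition Aset (X : Type) (d : X -> X -> R) : (PN -> Prop) -> Prop :=
  fun sigma => FinNE sigma /\
    ~ (exists V : PN -> (X -> Prop) -> Prop,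
          (forall i, sigma i ->
              uniformly_bounded d (V i) /\ r_disjoint d (INR (proj1_sig i)) (V i)) /\
          (forall x, exists i, sigma i /\ exists U, V i U /\ U x)).

Definition bounded_space (X : Type) (d : X -> X -> R) : Prop :=
  exists C : R, forall x y, (d x y <= C)%R.

(* trasdim X = omega  (trasdim X = -1 iff X bounded, otherwise Ord A(X,d)) *)
Definition trasdim_eq_omega (X : Type) (d : X -> X -> R) : Prop :=
  ~ bounded_space d /\ OrdEqOmega (Aset d).

(* Upper bound: points of L_omega of length at least a are a-separated, so their singletons form
   an a-disjoint family. The points of each length d < a split into 2^d classes according to the
   parities of the coordinates of the cube of side R containing them; within a class, distinct
   cubes are more than R apart. Giving every class its own colour i < R covers L_omega, so a set
   in A(L_omega) containing a has fewer than 2 + 4 + ... + 2^(a-1) further elements, and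
   Ord A(L_omega)^a is finite.

   Lower bound: the k colours 2k+1, ..., 3k never suffice. On the grid k.{0..N+1}^k neighbouring
   points are at distance k, below every colour, so neighbours of the same colour lie in the same
   member of the cover. Numbering the coordinates 1..k, label a point having a zero coordinate by
   the first such coordinate, and any other point by c if its colour is 2k+c and its member meets
   the facet x_c = 1, by 0 otherwise. Once N exceeds the diameters of the members, this
   is a Sperner labelling of the Kuhn triangulation of the grid, and counting its doors modulo 2
   gives a fully labelled simplex. The vertex of that simplex carrying the number of the colour
   of its 0-labelled vertex shows that the member of the latter meets its facet after all. *)

From Stdlib Require Import ZArith Reals List Lia Lra.
From Stdlib Require Import Classical ClassicalEpsilon FunctionalExtensionality PropExtensionality.
Open Scope Z_scope.

Lemma supd_nonneg a b : 0 <= supd a b.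
Proof.
revert b; induction a as [|x a IH]; intros [|y b]; simpl; try lia.
Qed.

Lemma supd_ge_nth a b i : (i < length a)%nat -> (i < length b)%nat ->
  Z.abs (nth i a 0 - nth i b 0) <= supd a b.
Proof.
revert b i; induction a as [|x a IH]; intros [|y b] [|i] Ha Hb; simpl in *; try lia.
specialize (IH b i ltac:(lia) ltac:(lia)); lia.
Qed.

Lemma supd_le a b M : 0 <= M -> length a = length b ->
  (forall i, (i < length a)%nat -> Z.abs (nth i a 0 - nth i b 0) <= M) -> supd a b <= M.
Proof.
revert b; induction a as [|x a IH]; intros [|y b] HM Hl H; simpl in *; try lia.
apply Z.max_lub.
- apply (H 0%nat); lia.
- apply IH; [lia|lia|]. intros i Hi; apply (H (S i)); lia.
Qed.

Lemma cpen_diag l : cpen l l = 0%nat.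
Proof. unfold cpen; rewrite Nat.sub_diag; reflexivity. Qed.

Lemma cpen_ge l k : (l < k)%nat -> (l <= cpen l k)%nat.
Proof. intros H; unfold cpen; destruct (k - l)%nat eqn:E; simpl; lia. Qed.

Lemma dinf_eq_supd a b : length a = length b -> dinf a b = supd a b.
Proof.
intros H; unfold dinf, pad; rewrite H, Nat.leb_refl, cpen_diag, Nat.sub_diag; simpl.
rewrite app_nil_r; pose proof (supd_nonneg a b); lia.
Qed.

Lemma dinf_ge_min_length a b : length a <> length b ->
  Z.of_nat (Nat.min (length a) (length b)) <= dinf a b.
Proof.
intros H; unfold dinf.
destruct (Nat.leb_spec (length a) (length b)).
- pose proof (cpen_ge (length a) (length b) ltac:(lia)). rewrite Nat.min_l by lia. lia.
- pose proof (cpen_ge (length b) (length a) ltac:(lia)). rewrite Nat.min_r by lia. lia.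
Qed.

Lemma nth_neq_of_neq (a b : list Z) : length a = length b -> a <> b ->
  exists i, (i < length a)%nat /\ nth i a 0 <> nth i b 0.
Proof.
revert b; induction a as [|x a IH]; intros [|y b] Hl Hne; simpl in *; try lia.
- congruence.
- destruct (Z.eq_dec x y) as [->|Hxy].
  + destruct (IH b ltac:(lia)) as [i [Hi Hn]]; [congruence|].
    exists (S i); split; [lia|exact Hn].
  + exists 0%nat; split; [lia|exact Hxy].
Qed.

Lemma OrdLe_of_size_le (L : Type) (n : nat) (M : (L -> Prop) -> Prop) :
  (forall s, M s -> exists x, s x) ->
  (forall s, M s -> forall l, NoDup l -> (forall x, In x l -> s x) -> (length l <= n)%nat) ->
  OrdLe M n.
Proof.
revert M; induction n as [|n IH]; intros M Hne Hsize; simpl.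
- intros s Hs; destruct (Hne s Hs) as [x Hx].
  assert (H1 := Hsize s Hs (x :: nil) ltac:(repeat constructor; simpl; tauto)
                  ltac:(intros y [->|[]]; exact Hx)).
  simpl in H1; lia.
- intros a; apply IH.
  + intros s [[_ Hs] _]; exact Hs.
  + intros s [_ [Hs Hna]] l Hl Hin.
    assert (Hal : NoDup (a :: l)) by (constructor; [intros Ha; apply Hna, Hin, Ha|exact Hl]).
    assert (H1 := Hsize _ Hs (a :: l) Hal
                    ltac:(intros x [->|Hx]; [left; reflexivity|right; apply Hin, Hx])).
    simpl in H1; lia.
Qed.

Lemma not_OrdLe_of_size (L : Type) (n : nat) (M : (L -> Prop) -> Prop) (l : list L) :
  NoDup l -> length l = S n -> M (fun x => In x l) -> ~ OrdLe M n.
Proof.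
revert M l; induction n as [|n IH]; intros M l Hnd Hl HM; simpl.
- intros H; exact (H _ HM).
- destruct l as [|a [|b l]]; try discriminate.
  inversion Hnd as [|? ? Ha Hnd']; subst; intros H.
  apply (IH (Mpt M a) (b :: l) Hnd' ltac:(simpl in *; lia)); [|apply H].
  split; [|split].
  + split; [exists (b :: l); tauto|exists b; left; reflexivity].
  + replace (fun x => x = a \/ In x (b :: l)) with (fun x => In x (a :: b :: l));
      [exact HM|].
    apply functional_extensionality; intros x; apply propositional_extensionality.
    simpl; split; intros [H'|H']; auto.
  + exact Ha.
Qed.

(** * The upper bound *)

Lemma singleton_Lomega_proof (z : Z) :
  (0 < length (z :: nil))%nat /\ Forall (fun x => (Z.of_nat (length (z :: nil)) | x)) (z :: nil).
Proof. split; [simpl; lia|]. repeat constructor; apply Z.divide_1_l. Qed.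

Definition singleton_Lomega (z : Z) : Lomega := exist _ (z :: nil) (singleton_Lomega_proof z).

Lemma Lomega_unbounded : ~ bounded_space dLomega.
Proof.
intros [C HC].
destruct (INR_unbounded C) as [N HN].
specialize (HC (singleton_Lomega 0) (singleton_Lomega (Z.of_nat N))).
unfold dLomega in HC; simpl in HC.
replace (dinf (0 :: nil) (Z.of_nat N :: nil)) with (Z.of_nat N) in HC
  by (rewrite dinf_eq_supd by reflexivity; simpl; lia).
rewrite INR_IZR_INZ in HN; lra.
Qed.

(* Two distinct points of (kZ)^k differ by a nonzero multiple of k in some coordinate. *)
Lemma dinf_Lomega_ge (x y : Lomega) (a : nat) :
  (a <= length (proj1_sig x))%nat -> (a <= length (proj1_sig y))%nat ->
  proj1_sig x <> proj1_sig y -> Z.of_nat a <= dinf (proj1_sig x) (proj1_sig y).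
Proof.
destruct x as [u [Hu Fu]], y as [v [Hv Fv]]; simpl; intros Ha Hb Hne.
destruct (Nat.eq_dec (length u) (length v)) as [E|E].
- rewrite dinf_eq_supd by exact E.
  destruct (nth_neq_of_neq u v E Hne) as [i [Hi Hn]].
  rewrite Forall_nth in Fu, Fv.
  destruct (Fu i 0 Hi) as [q1 Hq1], (Fv i 0 ltac:(lia)) as [q2 Hq2].
  pose proof (supd_ge_nth u v i Hi ltac:(lia)) as Hsup.
  rewrite Hq1, Hq2, <- E in *.
  assert (q1 <> q2) by (intros ->; apply Hn; reflexivity).
  replace (q1 * Z.of_nat (length u) - q2 * Z.of_nat (length u))
    with ((q1 - q2) * Z.of_nat (length u)) in Hsup by ring.
  rewrite Z.abs_mul, (Z.abs_eq (Z.of_nat (length u))) in Hsup by lia.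
  nia.
- pose proof (dinf_ge_min_length u v E); lia.
Qed.

Fixpoint bool_lists (d : nat) : list (list bool) :=
  match d with
  | O => nil :: nil
  | S d => flat_map (fun q => (false :: q) :: (true :: q) :: nil) (bool_lists d)
  end.

Lemma In_bool_lists q : In q (bool_lists (length q)).
Proof.
induction q as [|b q IH]; simpl; [left; reflexivity|].
apply in_flat_map; exists q; split; [exact IH|]. destruct b; simpl; tauto.
Qed.

Definition short_patterns (a : nat) : list (list bool) := flat_map bool_lists (seq 1 (a - 1)).

Lemma In_short_patterns a (q : list bool) : (1 <= length q < a)%nat -> In q (short_patterns a).
Proof.
intros H; apply in_flat_map; exists (length q); split; [apply in_seq; lia|apply In_bool_lists].
Qed.

Lemma Zabs_sub_ge2_same_parity x y : Z.odd x = Z.odd y -> x <> y -> 2 <= Z.abs (x - y).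
Proof.
intros Ho Hne.
assert (Hm : (x - y) mod 2 = 0).
{ rewrite Zmod_odd, Z.odd_sub, Ho; destruct (Z.odd y); reflexivity. }
pose proof (Z.div_mod (x - y) 2 ltac:(lia)) as Hd; rewrite Hm in Hd; lia.
Qed.

Lemma Zabs_sub_lt_same_div R z1 z2 : 0 < R -> z1 / R = z2 / R -> Z.abs (z1 - z2) < R.
Proof.
intros HR E.
pose proof (Z.div_mod z1 R ltac:(lia)); pose proof (Z.div_mod z2 R ltac:(lia)).
pose proof (Z.mod_pos_bound z1 R HR); pose proof (Z.mod_pos_bound z2 R HR).
rewrite E in *; lia.
Qed.

Lemma Zabs_sub_gt_far_div R z1 z2 : 0 < R -> 2 <= Z.abs (z1 / R - z2 / R) ->
  R + 1 <= Z.abs (z1 - z2).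
Proof.
intros HR E.
pose proof (Z.div_mod z1 R ltac:(lia)); pose proof (Z.div_mod z2 R ltac:(lia)).
pose proof (Z.mod_pos_bound z1 R HR); pose proof (Z.mod_pos_bound z2 R HR).
set (q1 := z1 / R) in *; set (q2 := z2 / R) in *.
destruct (Z.le_ge_cases q1 q2).
- assert (R * (q2 - q1) >= 2 * R) by nia; lia.
- assert (R * (q1 - q2) >= 2 * R) by nia; lia.
Qed.

Definition cube (R : Z) (b : list Z) : Lomega -> Prop :=
  fun y => map (fun z => z / R) (proj1_sig y) = b.

Lemma nth_map_div R (u : list Z) i : nth i (map (fun z => z / R) u) 0 = nth i u 0 / R.
Proof.
revert i; induction u as [|z u IH]; intros [|i]; simpl; auto using Zdiv_0_l.
Qed.

Lemma nth_map_odd (u : list Z) i : nth i (map Z.odd u) false = Z.odd (nth i u 0).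
Proof. change false with (Z.odd 0); apply map_nth. Qed.

Lemma length_cube R b y : cube R b y -> length (proj1_sig y) = length b.
Proof. intros <-; symmetry; apply length_map. Qed.

Lemma dinf_cube_le R b y1 y2 : 0 < R -> cube R b y1 -> cube R b y2 ->
  dinf (proj1_sig y1) (proj1_sig y2) <= R.
Proof.
intros HR H1 H2.
assert (El : length (proj1_sig y1) = length (proj1_sig y2))
  by (rewrite (length_cube _ _ _ H1), (length_cube _ _ _ H2); reflexivity).
rewrite dinf_eq_supd by exact El.
apply supd_le; [lia|exact El|]; intros i _.
assert (E : nth i (map (fun z => z / R) (proj1_sig y1)) 0
          = nth i (map (fun z => z / R) (proj1_sig y2)) 0) by (rewrite H1, H2; reflexivity).
rewrite !nth_map_div in E; pose proof (Zabs_sub_lt_same_div R _ _ HR E); lia.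
Qed.

(* Cubes whose indices have the same parities are separated by a whole cube. *)
Lemma dinf_cube_ge R b1 b2 y1 y2 : 0 < R -> cube R b1 y1 -> cube R b2 y2 ->
  map Z.odd b1 = map Z.odd b2 -> b1 <> b2 -> R + 1 <= dinf (proj1_sig y1) (proj1_sig y2).
Proof.
intros HR H1 H2 Ho Hne.
assert (Hl : length b1 = length b2)
  by (rewrite <- (length_map Z.odd b1), <- (length_map Z.odd b2), Ho; reflexivity).
assert (El : length (proj1_sig y1) = length (proj1_sig y2))
  by (rewrite (length_cube _ _ _ H1), (length_cube _ _ _ H2); exact Hl).
rewrite dinf_eq_supd by exact El.
destruct (nth_neq_of_neq b1 b2 Hl Hne) as [i [Hi Hn]].
assert (Eo : nth i (map Z.odd b1) false = nth i (map Z.odd b2) false) by (rewrite Ho; reflexivity).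
rewrite !nth_map_odd in Eo.
pose proof (Zabs_sub_ge2_same_parity _ _ Eo Hn) as Hq.
rewrite <- H1, <- H2, !nth_map_div in Hq.
pose proof (Zabs_sub_gt_far_div R _ _ HR Hq).
assert (Hi1 := length_cube _ _ _ H1).
pose proof (supd_ge_nth (proj1_sig y1) (proj1_sig y2) i ltac:(lia) ltac:(lia)).
lia.
Qed.

Definition sum_PN (l : list PN) : Z := fold_right (fun i s => Z.of_nat (proj1_sig i) + s) 0 l.

Lemma sum_PN_bounds (l : list PN) :
  0 <= sum_PN l /\ forall i, In i l -> Z.of_nat (proj1_sig i) <= sum_PN l.
Proof.
induction l as [|j l [IH1 IH2]]; simpl; split; try tauto; try lia.
intros i [->|Hi]; [lia|specialize (IH2 i Hi); lia].
Qed.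

(* Colour [a] covers the points of length at least [a] by singletons; the [t]-th parity pattern
   of a shorter length gets the colour [nth t l a] and is covered by cubes of side
   [1 + sum_PN l], which exceeds every colour in [l]. *)
Definition parity_cover (a : PN) (l : list PN) : PN -> (Lomega -> Prop) -> Prop := fun i U =>
  (i = a /\ exists z, (proj1_sig a <= length z)%nat /\ U = (fun y : Lomega => proj1_sig y = z))
  \/ exists t b, (t < length (short_patterns (proj1_sig a)))%nat /\ nth t l a = i /\
       map Z.odd b = nth t (short_patterns (proj1_sig a)) nil /\ U = cube (1 + sum_PN l) b.

Lemma parity_cover_bounded (a : PN) (l : list PN) (i : PN) :
  uniformly_bounded dLomega (parity_cover a l i).
Proof.
destruct (sum_PN_bounds l) as [HS _].
exists (IZR (1 + sum_PN l)); split; [apply IZR_lt; lia|].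
intros U HU y1 y2 H1 H2; unfold dLomega; apply IZR_le.
destruct HU as [[_ [z [_ ->]]] | [t [b [_ [_ [_ ->]]]]]].
- rewrite H1, H2, dinf_eq_supd by reflexivity.
  apply supd_le; [lia|reflexivity|]; intros j _; rewrite Z.sub_diag; lia.
- apply (dinf_cube_le _ b); auto; lia.
Qed.

Lemma parity_cover_disjoint (a : PN) (l : list PN) (i : PN) :
  NoDup l -> ~ In a l -> (length (short_patterns (proj1_sig a)) <= length l)%nat ->
  r_disjoint dLomega (INR (proj1_sig i)) (parity_cover a l i).
Proof.
intros Hnd Ha Hlen U1 U2 HU1 HU2 Hne y1 y2 H1 H2.
unfold dLomega; rewrite INR_IZR_INZ; apply IZR_le.
destruct (sum_PN_bounds l) as [HS0 HS].
destruct HU1 as [[Ei1 [z1 [Hz1 ->]]] | [t1 [b1 [Ht1 [Et1 [Ho1 ->]]]]]];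
destruct HU2 as [[Ei2 [z2 [Hz2 ->]]] | [t2 [b2 [Ht2 [Et2 [Ho2 ->]]]]]].
- subst i; assert (z1 <> z2) by (intros ->; apply Hne; reflexivity).
  apply dinf_Lomega_ge; congruence.
- exfalso; apply Ha; rewrite <- Ei1, <- Et2; apply nth_In; lia.
- exfalso; apply Ha; rewrite <- Ei2, <- Et1; apply nth_In; lia.
- assert (t1 = t2) as <-.
  { rewrite (NoDup_nth l a) in Hnd; apply Hnd; [lia|lia|congruence]. }
  assert (b1 <> b2) by (intros ->; apply Hne; reflexivity).
  pose proof (dinf_cube_ge (1 + sum_PN l) b1 b2 y1 y2 ltac:(lia) H1 H2 ltac:(congruence) H).
  assert (Hi : In i l) by (rewrite <- Et1; apply nth_In; lia).
  specialize (HS i Hi); lia.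
Qed.

Lemma parity_cover_covers (a : PN) (l : list PN) :
  (length (short_patterns (proj1_sig a)) <= length l)%nat ->
  forall x, exists i, (i = a \/ In i l) /\ exists U, parity_cover a l i U /\ U x.
Proof.
intros Hlen x.
destruct (le_lt_dec (proj1_sig a) (length (proj1_sig x))) as [Hl|Hl].
- exists a; split; [left; reflexivity|].
  exists (fun y : Lomega => proj1_sig y = proj1_sig x); split; [|reflexivity].
  left; split; [reflexivity|]; exists (proj1_sig x); split; [exact Hl|reflexivity].
- set (b := map (fun z => z / (1 + sum_PN l)) (proj1_sig x)).
  assert (Hx0 : (0 < length (proj1_sig x))%nat) by apply (proj2_sig x).
  assert (Hq : (1 <= length (map Z.odd b) < proj1_sig a)%nat)
    by (unfold b; rewrite !length_map; lia).
  destruct (In_nth _ _ nil (In_short_patterns _ _ Hq)) as [t [Ht Et]].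
  exists (nth t l a); split; [right; apply nth_In; lia|].
  exists (cube (1 + sum_PN l) b); split; [|reflexivity].
  right; exists t, b; repeat split; auto.
Qed.

Lemma Aset_extension_size (a : PN) (tau : PN -> Prop) (l : list PN) :
  Aset dLomega (fun x => x = a \/ tau x) -> ~ tau a -> NoDup l -> (forall x, In x l -> tau x) ->
  (length l < length (short_patterns (proj1_sig a)))%nat.
Proof.
intros [_ HA] Hna Hnd Hin.
destruct (Nat.lt_ge_cases (length l) (length (short_patterns (proj1_sig a)))) as [H|Hlen];
  [exact H|exfalso; apply HA].
exists (parity_cover a l); split.
- intros i _; split; [apply parity_cover_bounded|].
  apply parity_cover_disjoint; auto.
- intros x; destruct (parity_cover_covers a l Hlen x) as [i [Hi HU]].
  exists i; split; [destruct Hi as [Hi|Hi]; [left|right; apply Hin]; exact Hi|exact HU].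
Qed.

Lemma Mpt_Aset_OrdLe (a : PN) : exists n, OrdLe (Mpt (Aset dLomega) a) n.
Proof.
exists (length (short_patterns (proj1_sig a))); apply OrdLe_of_size_le.
- intros s [[_ Hs] _]; exact Hs.
- intros s [_ [HA Hna]] l Hnd Hin.
  pose proof (Aset_extension_size a s l HA Hna Hnd Hin); lia.
Qed.

Definition mkPN (j : nat) : PN := exist _ (S j) (Nat.lt_0_succ j).

Lemma PN_inj (a b : PN) : proj1_sig a = proj1_sig b -> a = b.
Proof.
destruct a as [a Ha], b as [b Hb]; simpl; intros ->; f_equal; apply Peano_dec.le_unique.
Qed.

Definition colours (k : nat) : list PN := map (fun t => mkPN (2 * k + t)) (seq 0 k).

Lemma length_colours k : length (colours k) = k.
Proof. unfold colours; rewrite length_map, length_seq; reflexivity. Qed.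

Lemma NoDup_colours k : NoDup (colours k).
Proof.
apply NoDup_map_NoDup_ForallPairs; [|apply seq_NoDup].
intros t1 t2 _ _ E; injection E; lia.
Qed.

Lemma In_colours k x : In x (colours k) -> (2 * k < proj1_sig x <= 3 * k)%nat.
Proof. unfold colours; rewrite in_map_iff; intros [t [<- Ht]]; apply in_seq in Ht; simpl; lia. Qed.

Lemma uniformly_bounded_list {X : Type} (d : X -> X -> R) (V : PN -> (X -> Prop) -> Prop)
    (l : list PN) :
  (forall i, In i l -> uniformly_bounded d (V i)) ->
  exists C, forall i, In i l -> forall A, V i A -> forall x y, A x -> A y -> (d x y <= C)%R.
Proof.
induction l as [|j l IH]; intros H.
- exists 0%R; intros i [].
- destruct IH as [C HC]; [intros i Hi; apply H; right; exact Hi|].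
  destruct (H j (or_introl eq_refl)) as [Cj [_ HCj]].
  exists (Rmax C Cj); intros i [<-|Hi] A HA x y Hx Hy.
  + apply Rle_trans with Cj; [apply (HCj A HA x y Hx Hy)|apply Rmax_r].
  + apply Rle_trans with C; [apply (HC i Hi A HA x y Hx Hy)|apply Rmax_l].
Qed.

Definition grid_list (m : nat) (f : nat -> nat) : list Z :=
  map (fun c => Z.of_nat (S m * f c)) (seq 0 (S m)).

Lemma length_grid_list m f : length (grid_list m f) = S m.
Proof. unfold grid_list; rewrite length_map, length_seq; reflexivity. Qed.

Lemma nth_grid_list m f c : (c < S m)%nat -> nth c (grid_list m f) 0 = Z.of_nat (S m * f c).
Proof.
intros Hc; unfold grid_list; set (g := fun c => Z.of_nat (S m * f c)).
rewrite nth_indep with (d' := g 0%nat) by (rewrite length_map, length_seq; exact Hc).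
rewrite map_nth, seq_nth by exact Hc; reflexivity.
Qed.

Lemma grid_list_Lomega m f : (0 < length (grid_list m f))%nat /\
  Forall (fun x => (Z.of_nat (length (grid_list m f)) | x)) (grid_list m f).
Proof.
rewrite length_grid_list; split; [lia|].
apply Forall_map, Forall_forall; intros c _; exists (Z.of_nat (f c)); lia.
Qed.

Definition grid_point m f : Lomega := exist _ (grid_list m f) (grid_list_Lomega m f).

Lemma grid_list_diff m f g c : (c < S m)%nat ->
  Z.abs (nth c (grid_list m f) 0 - nth c (grid_list m g) 0)
  = Z.of_nat (S m) * Z.abs (Z.of_nat (f c) - Z.of_nat (g c)).
Proof.
intros Hc; rewrite !nth_grid_list, !Nat2Z.inj_mul by exact Hc.
rewrite <- Z.mul_sub_distr_l, Z.abs_mul, (Z.abs_eq (Z.of_nat (S m))); lia.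
Qed.

Lemma dinf_grid_ge m f g c : (c < S m)%nat ->
  Z.of_nat (S m) * Z.abs (Z.of_nat (f c) - Z.of_nat (g c)) <= dinf (grid_list m f) (grid_list m g).
Proof.
intros Hc; rewrite <- grid_list_diff by exact Hc.
rewrite dinf_eq_supd by (rewrite !length_grid_list; reflexivity).
apply supd_ge_nth; rewrite length_grid_list; exact Hc.
Qed.

Lemma dinf_grid_le m f g :
  (forall c, (c < S m)%nat -> (f c <= g c + 1 /\ g c <= f c + 1)%nat) ->
  dinf (grid_list m f) (grid_list m g) <= Z.of_nat (S m).
Proof.
intros H; rewrite dinf_eq_supd by (rewrite !length_grid_list; reflexivity).
apply supd_le; [lia|rewrite !length_grid_list; reflexivity|].
intros c Hc; rewrite length_grid_list in Hc; rewrite grid_list_diff by exact Hc.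
specialize (H c Hc); assert (Z.abs (Z.of_nat (f c) - Z.of_nat (g c)) <= 1) by lia; nia.
Qed.

Close Scope Z_scope.
From mathcomp Require Import all_boot all_fingroup zify.
Set Implicit Arguments. Unset Strict Implicit. Unset Printing Implicit Defensive.

(** * Sperner's lemma for the Kuhn triangulation *)

Lemma fixfree_involution_card_even (T : finType) (f : T -> T) (A : {set T}) :
  {in A, forall x, f x \in A} -> {in A, forall x, f (f x) = x} ->
  {in A, forall x, f x != x} -> ~~ odd #|A|.
Proof.
have [c] := ubnP #|A|; elim: c A => // c IH A ltAc fA ffA nfA.
case: (set_0Vmem A) => [->|[x xA]]; first by rewrite cards0.
have fxA := fA x xA; have fxx := nfA x xA.
set A' := A :\ x :\ f x.
have cardA : #|A| = #|A'|.+2.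
  by rewrite /A' (cardsD1 x A) xA (cardsD1 (f x) (A :\ x)) in_setD1 fxx fxA.
have A'P z : z \in A' -> [/\ z \in A, z != x & z != f x].
  by rewrite !in_setD1 => /and3P [].
rewrite cardA /= negbK; apply: IH.
- by move: ltAc; rewrite cardA; lia.
- move=> z /A'P [zA zx zfx]; rewrite !in_setD1 fA // andbT.
  apply/andP; split.
  + by apply: contra zx => /eqP e; rewrite -(ffA z zA) e ffA.
  + by apply: contra zfx => /eqP e; rewrite -(ffA z zA) e.
- by move=> z /A'P [zA _ _]; apply: ffA.
- by move=> z /A'P [zA _ _]; apply: nfA.
Qed.

Lemma strictly_increasing_id (F : nat -> nat) (m : nat) :
  (forall i, i < m -> F i < F i.+1) -> (forall i, i <= m -> F i <= m) ->
  forall i, i <= m -> F i = i.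
Proof.
move=> incF leFm.
have geF i : i <= m -> i <= F i.
  by elim: i => // i IH im; have := incF i im; have := IH (ltnW im); lia.
have leF t : t <= m -> F (m - t) <= m - t.
  elim: t => [_|t IH tm]; first by rewrite subn0 leFm.
  have := incF (m - t.+1) ltac:(lia); have -> : (m - t.+1).+1 = m - t by lia.
  by have := IH (ltnW tm); lia.
by move=> i im; have := leF (m - i) (leq_subr _ _); rewrite subKn //; have := geF i im; lia.
Qed.

Section Sperner.
Variables (m n : nat) (L : {ffun 'I_m.+1 -> nat} -> nat).
Local Notation k := m.+1.
Local Notation Pt := {ffun 'I_k -> nat}.
Local Notation Corner := {ffun 'I_k -> 'I_n.+1}.

(* Kuhn triangulation of the grid {0..n+1}^k: the simplex (y, p) of the unit cube with corner y
   has the vertices y + e_(p 0) + ... + e_(p (i-1)), i <= k. *)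
Definition kuhn_vertex (y : Corner) (p : 'S_k) (i : 'I_k.+1) : Pt :=
  [ffun c => y c + (nat_of_ord ((p^-1)%g c) < i)].

(* A door is a simplex with a marked vertex j whose opposite facet carries all labels 1..k. *)
Definition door (d : Corner * 'S_k * 'I_k.+1) : bool :=
  let: (y, p, j) := d in
  [forall l : 'I_k, [exists i : 'I_k.+1, (i != j) && (L (kuhn_vertex y p i) == l.+1)]].

Definition fully_labelled y p := forall l : 'I_k.+1, exists i, L (kuhn_vertex y p i) = l.

Lemma door_label_unique y p j : door (y, p, j) ->
  forall i, i != j -> exists l : 'I_k, L (kuhn_vertex y p i) = l.+1 /\
     forall i', i' != j -> L (kuhn_vertex y p i') = l.+1 -> i' = i.
Proof.
move=> /forallP Hd.
pose g (l : 'I_k) := odflt ord0 [pick i | (i != j) && (L (kuhn_vertex y p i) == l.+1)].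
have gP l : g l != j /\ L (kuhn_vertex y p (g l)) = l.+1.
  rewrite /g; case: pickP => [i /andP [H1 /eqP H2] //|H].
  by have /existsP [i Hi] := Hd l; rewrite H in Hi.
have ginj : injective g.
  move=> l1 l2 e; apply/val_inj.
  by have [_ e1] := gP l1; have [_ e2] := gP l2; move: e1; rewrite e e2 => -[].
have img : g @: setT = [set~ j].
  apply/eqP; rewrite eqEcard; apply/andP; split.
    by apply/subsetP => i /imsetP [l _ ->]; rewrite in_setC1; case: (gP l).
  by rewrite card_imset // cardsC1 cardsT !card_ord.
have inimg i : i != j -> exists l, i = g l.
  move=> ij; have : i \in g @: setT by rewrite img in_setC1.
  by case/imsetP => l _ ->; exists l.
move=> i ij; have [l ->] := inimg i ij; exists l; split; first by case: (gP l).
move=> i' i'j e; have [l' el'] := inimg i' i'j.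
have [_ e'] := gP l'; rewrite el' e' in e.
by rewrite el'; congr g; apply/val_inj; case: e.
Qed.

Hypothesis label_le : forall x, L x <= k.

(* Inside a simplex that is not fully labelled, the label of the marked vertex of a door occurs
   on exactly one other vertex, which marks the only other door of the simplex. *)
Lemma door_partner y p j : door (y, p, j) -> ~ fully_labelled y p ->
  exists j', [/\ j' != j, L (kuhn_vertex y p j') = L (kuhn_vertex y p j) & door (y, p, j')].
Proof.
move=> Hd nf; have /forallP Hd' := Hd.
have Lj_gt0 : 0 < L (kuhn_vertex y p j).
  rewrite lt0n; apply: contra_notN nf => /eqP Lj0 l.
  have [l0|lp] := eqVneq (nat_of_ord l) 0; first by exists j; rewrite Lj0 l0.
  have /existsP [i /andP [_ /eqP Hi]] := Hd' (inord l.-1).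
  by exists i; rewrite Hi inordK ?prednK ?lt0n //; have := ltn_ord l; lia.
have lk := label_le (kuhn_vertex y p j).
have /existsP [j' /andP [j'j /eqP Hj']] := Hd' (inord (L (kuhn_vertex y p j)).-1).
rewrite inordK in Hj'; last by lia.
have Ej : L (kuhn_vertex y p j') = L (kuhn_vertex y p j) by rewrite Hj'; lia.
exists j'; split => //.
apply/forallP => l; have /existsP [i0 /andP [i0j /eqP Hi0]] := Hd' l.
apply/existsP; have [e|ne] := eqVneq i0 j'.
  by exists j; rewrite eq_sym j'j /= -Ej -e Hi0.
by exists i0; rewrite ne Hi0 eqxx.
Qed.

Definition doors := [set d | door d].

Lemma doors_even : (forall y p, ~ fully_labelled y p) -> ~~ odd #|doors|.
Proof.
move=> nf.
pose h (d : Corner * 'S_k * 'I_k.+1) := let: (y, p, j) := d in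
  (y, p, odflt j [pick j' | (j' != j) && (L (kuhn_vertex y p j') == L (kuhn_vertex y p j))
                             && door (y, p, j')]).
have hP y p j : door (y, p, j) -> exists j', [/\ h (y, p, j) = (y, p, j'), j' != j,
    L (kuhn_vertex y p j') = L (kuhn_vertex y p j) & door (y, p, j')].
  move=> Hd; rewrite /h; case: pickP => [j' /andP [/andP [H1 /eqP H2] H3]|H].
    by exists j'.
  have [j' [H1 H2 H3]] := door_partner Hd (nf y p).
  by have := H j'; rewrite H1 H2 eqxx H3.
apply: (@fixfree_involution_card_even _ h).
- by move=> [[y p] j]; rewrite !inE => /hP [j' [-> _ _ H]].
- move=> [[y p] j]; rewrite inE => /hP [j' [-> H1 H2 H3]].
  have [j'' [-> H1' H2' _]] := hP y p j' H3.
  have jj' : j != j' by rewrite eq_sym.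
  have [l [El U]] := door_label_unique H3 jj'.
  by rewrite (U j'') // H2' H2.
- move=> [[y p] j]; rewrite inE => /hP [j' [-> H1 _ _]].
  by apply: contra H1 => /eqP [->].
Qed.

Lemma door_transport y p j y' p' j' (f : 'I_k.+1 -> 'I_k.+1) :
  (forall i, i != j -> f i != j' /\ kuhn_vertex y' p' (f i) = kuhn_vertex y p i) ->
  door (y, p, j) -> door (y', p', j').
Proof.
move=> Hf /forallP Hd; apply/forallP => l.
have /existsP [i /andP [ij /eqP Hi]] := Hd l; have [fij Efi] := Hf i ij.
by apply/existsP; exists (f i); rewrite fij Efi Hi eqxx.
Qed.

Definition rot : 'S_k := perm (@ordS_inj k).
Definition raise (y : Corner) (c0 : 'I_k) : Corner := [ffun c => inord (y c + (c == c0))].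
Definition lower (y : Corner) (c0 : 'I_k) : Corner := [ffun c => inord (y c - (c == c0))].

Lemma val_ordS (q : 'I_k) : nat_of_ord (ordS q) = if nat_of_ord q == m then 0 else q.+1.
Proof.
rewrite /ordS /=; case: eqP => [->|ne]; first by rewrite modnn.
by rewrite modn_small //; have := ltn_ord q; lia.
Qed.

Lemma val_ord_pred (q : 'I_k) : nat_of_ord (ord_pred q) = if nat_of_ord q == 0 then m else q.-1.
Proof.
rewrite /ord_pred /=; case: eqP => [->|ne]; first by rewrite add0n /= modn_small.
have lq := ltn_ord q; have -> : (q + k).-1 = q.-1 + k by lia.
by rewrite modnDr modn_small //; lia.
Qed.

Lemma rotE q : rot q = ordS q.
Proof. by rewrite permE. Qed.

Lemma rotVE q : (rot^-1)%g q = ord_pred q.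
Proof. by apply: (@perm_inj _ rot); rewrite permKV rotE ord_predK. Qed.

Lemma eq_permV (p : 'S_k) c c' : (c == p c') = ((p^-1)%g c == c').
Proof. by apply/eqP/eqP => [->|<-]; rewrite ?permK ?permKV. Qed.

Lemma lower_raise (y : Corner) c : y c < n -> lower (raise y c) c = y.
Proof.
move=> yc; apply/ffunP => c'; rewrite !ffunE; apply: ord_inj => /=.
have := ltn_ord (y c'); case: eqP => [->|_] h; first by rewrite !inordK; lia.
by rewrite !addn0 subn0 !inord_val.
Qed.

Lemma raise_lower (y : Corner) c : 0 < y c -> raise (lower y c) c = y.
Proof.
move=> yc; apply/ffunP => c'; rewrite !ffunE; apply: ord_inj => /=.
have := ltn_ord (y c'); case: eqP => [->|_] h; first by rewrite !inordK; lia.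
by rewrite !addn0 subn0 !inord_val.
Qed.

Lemma kuhn_vertex_tperm y p (j : 'I_k.+1) i : 0 < j < k -> i != j ->
  kuhn_vertex y (tperm (inord j.-1) (inord j) * p)%g i = kuhn_vertex y p i.
Proof.
move=> /andP [j0 jk] /eqP ij; apply/ffunP => c; rewrite !ffunE invMg permM tpermV.
have ij' : nat_of_ord i <> nat_of_ord j by move=> e; apply: ij; apply: val_inj.
by congr addn; case: tpermP => [->|->|//]; rewrite !inordK; lia.
Qed.

Lemma kuhn_vertex_near y p i i' c :
  kuhn_vertex y p i c <= kuhn_vertex y p i' c + 1.
Proof. by rewrite !ffunE -addnA leq_add2l; apply: leq_trans (leq_b1 _) (leq_addl _ _). Qed.

Lemma kuhn_vertex_raise (y : Corner) (p : 'S_k) (i : 'I_k.+1) : y (p ord0) < n ->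
  i != ord_max -> kuhn_vertex (raise y (p ord0)) (rot * p)%g i = kuhn_vertex y p (inord i.+1).
Proof.
move=> yn im; have im' : nat_of_ord i != k by [].
have ik := ltn_ord i.
apply/ffunP => c; rewrite !ffunE invMg permM rotVE val_ord_pred eq_permV.
have hy : y c + (p^-1%g c == ord0) < n.+1.
  case: eqP => [e|_]; last by rewrite addn0.
  by move: yn; rewrite -e permKV addn1.
rewrite inordK // inordK; last by lia.
case: eqP => [->|ne] /=; first by lia.
have ne' : nat_of_ord (p^-1%g c) != 0 by apply/eqP => e; apply: ne; apply/val_inj.
rewrite ifF; last exact/negbTE.
by rewrite addn0; congr addn; move: ne'; case: (nat_of_ord _) => [|q] //= _; lia.
Qed.

Lemma kuhn_vertex_lower (y : Corner) (p : 'S_k) (i : 'I_k.+1) : 0 < y (p ord_max) ->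
  i != ord0 -> kuhn_vertex (lower y (p ord_max)) (rot^-1 * p)%g i = kuhn_vertex y p (inord i.-1).
Proof.
move=> yn i0; have i0' : nat_of_ord i != 0 by [].
have ik := ltn_ord i.
apply/ffunP => c; rewrite !ffunE invMg permM invgK rotE val_ordS eq_permV.
have hy : y c - (p^-1%g c == ord_max) < n.+1.
  by rewrite ltnS; apply: leq_trans (leq_subr _ _) _; rewrite -ltnS.
rewrite inordK // inordK; last by lia.
case: eqP => [e|ne] /=.
  have ec : c = p ord_max by rewrite -e permKV.
  by rewrite e eqxx /= -ec in yn *; lia.
have ne' : nat_of_ord (p^-1%g c) != m by apply/eqP => e; apply: ne; apply/val_inj.
rewrite ifF; last exact/negbTE.
by rewrite subn0; congr addn; move: ne'; case: (nat_of_ord _) => [|q] /= ne'; lia.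
Qed.

Definition first_zero (x : Pt) : nat := find (fun c => x (inord c) == 0) (iota 0 k).

Lemma has_zero (x : Pt) (c : 'I_k) : x c = 0 -> has (fun c => x (inord c) == 0) (iota 0 k).
Proof.
move=> e; apply/hasP; exists (nat_of_ord c); first by rewrite mem_iota /= ltn_ord.
by rewrite inord_val e.
Qed.

Lemma first_zero_lt (x : Pt) (c : 'I_k) : x c = 0 -> first_zero x < k.
Proof. by move=> /has_zero; rewrite has_find size_iota. Qed.

Lemma first_zeroP (x : Pt) (c : 'I_k) : x c = 0 -> x (inord (first_zero x)) = 0.
Proof.
move=> e; have := nth_find 0 (has_zero e).
by rewrite nth_iota ?add0n; [move/eqP|exact: first_zero_lt e].
Qed.

Lemma before_first_zero (x : Pt) c' : c' < first_zero x -> c' < k -> x (inord c') != 0.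
Proof. by move=> lt ck; have := before_find 0 lt; rewrite nth_iota ?add0n // => /negbT. Qed.

Lemma first_zero_le (x : Pt) (c : 'I_k) : x c = 0 -> first_zero x <= c.
Proof.
move=> e; rewrite leqNgt; apply/negP => lt.
by have := before_first_zero lt (ltn_ord c); rewrite inord_val e.
Qed.

Lemma first_zero_eq (x : Pt) (c : 'I_k) :
  x c = 0 -> (forall c' : 'I_k, c' < c -> x c' != 0) -> first_zero x = c.
Proof.
move=> e H; apply/eqP; rewrite eqn_leq first_zero_le //= leqNgt; apply/negP => lt.
have := H (inord (first_zero x)); rewrite inordK; last by have := ltn_ord c; lia.
by move/(_ lt); rewrite (first_zeroP e).
Qed.

Hypothesis label_zero : forall (x : Pt) (c : 'I_k), x c = 0 -> L x = (first_zero x).+1.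
Hypothesis label_top : forall (x : Pt) (c : 'I_k), x c = n.+1 -> L x != c.+1.

Lemma door_ord0_lt y p : door (y, p, ord0) -> y (p ord0) < n.
Proof.
move=> /forallP Hd; rewrite ltn_neqAle -ltnS ltn_ord andbT; apply/negP => /eqP e.
have /existsP [i /andP [i0 /eqP Hi]] := Hd (p ord0).
have := label_top (x := kuhn_vertex y p i) (c := p ord0).
by rewrite Hi eqxx ffunE permK e /= lt0n i0 => /(_ (addn1 _)).
Qed.

Lemma inord_neq_max i : i <= m -> (inord i : 'I_k.+1) != ord_max.
Proof. by move=> im; apply/eqP => /(congr1 val) /=; rewrite inordK; lia. Qed.

Lemma door_max_first_zero y p : door (y, p, ord_max) -> y (p ord_max) = 0 :> nat ->
  forall i, i <= m -> first_zero (kuhn_vertex y p (inord i)) = i.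
Proof.
move=> Hd y0.
have zero i : i <= m -> kuhn_vertex y p (inord i) (p ord_max) = 0.
  by move=> im; rewrite ffunE permK y0 inordK /=; lia.
pose F i := first_zero (kuhn_vertex y p (inord i)).
apply: (@strictly_increasing_id F) => i im; last by rewrite -ltnS; apply: first_zero_lt (zero i im).
have le_F : F i <= F i.+1.
  have := first_zeroP (zero _ im); rewrite -/(F i.+1) => z1.
  have lt1 : F i.+1 < k by apply: first_zero_lt (zero _ im).
  suff : kuhn_vertex y p (inord i) (inord (F i.+1)) = 0 by move/first_zero_le; rewrite inordK.
  by move: z1; rewrite !ffunE !inordK //; lia.
rewrite ltn_neqAle le_F andbT; apply/eqP => eF.
have [l [El U]] := door_label_unique Hd (inord_neq_max (ltnW im)).
have := U _ (inord_neq_max im).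
rewrite (label_zero (zero _ im)) -/(F i.+1) -eF -(label_zero (zero _ (ltnW im))) El.
by move=> /(_ erefl) /(congr1 val) /=; rewrite !inordK; lia.
Qed.

Lemma door_max_start y p : door (y, p, ord_max) -> y (p ord_max) = 0 :> nat ->
  y = [ffun => ord0] /\ p = 1%g.
Proof.
move=> Hd y0; have Fid := door_max_first_zero Hd y0.
have zero (c : 'I_k) : kuhn_vertex y p (inord c) (p ord_max) = 0.
  by rewrite ffunE permK y0 inordK /=; have := ltn_ord c; lia.
have diag (c : 'I_k) : y c = 0 :> nat /\ ~~ ((p^-1)%g c < c).
  have cm : nat_of_ord c <= m by rewrite -ltnS.
  have := first_zeroP (zero c); rewrite Fid // inord_val ffunE inordK; last by lia.
  by move/eqP; rewrite addn_eq0 eqb0 => /andP [/eqP -> ->].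
have pV (c : 'I_k) : (p^-1)%g c = c.
  apply/val_inj => /=; have [_ h1] := diag c; rewrite -leqNgt in h1.
  case: (ltnP (nat_of_ord c) m) => cm; last by have := ltn_ord ((p^-1)%g c); lia.
  have : kuhn_vertex y p (inord c.+1) (inord c) != 0.
    by apply: before_first_zero; rewrite ?Fid //; lia.
  rewrite inord_val ffunE inordK; last by lia.
  by rewrite (proj1 (diag c)) add0n eqb0 negbK ltnS; lia.
split; first by apply/ffunP => c; rewrite ffunE; apply/val_inj; case: (diag c).
by apply/permP => c; rewrite perm1; apply: (@perm_inj _ (p^-1)%g); rewrite permK pV.
Qed.

Definition start : Corner * 'S_k * 'I_k.+1 := ([ffun => ord0], 1%g, ord_max).

Lemma door_start : door start.
Proof.
apply/forallP => l; apply/existsP; exists (inord l); have lk := ltn_ord l.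
rewrite inord_neq_max //=.
have vE (c : 'I_k) : kuhn_vertex [ffun => ord0] 1 (inord l) c = (c < l).
  by rewrite !ffunE invg1 perm1 /= inordK // ltnW.
rewrite (label_zero (c := l)) ?vE ?ltnn //; apply/eqP; congr S.
by apply: first_zero_eq; rewrite ?vE ?ltnn // => c' lt; rewrite vE lt.
Qed.

(* Crossing the facet opposite the marked vertex j: an inner vertex is replaced by swapping two
   consecutive steps of the path from y, vertex 0 (resp. k) by passing to the neighbouring cube.
   Where there is no neighbouring cube, the door is fixed. *)
Definition flip (d : Corner * 'S_k * 'I_k.+1) : Corner * 'S_k * 'I_k.+1 :=
  let: (y, p, j) := d in
  if j == ord0 then
    (if y (p ord0) < n then (raise y (p ord0), (rot * p)%g, ord_max) else d)
  else if j == ord_max then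
    (if 0 < y (p ord_max) then (lower y (p ord_max), (rot^-1 * p)%g, ord0) else d)
  else (y, (tperm (inord j.-1) (inord j) * p)%g, j).

Lemma flip_start : flip start = start.
Proof. by rewrite /flip /start /= eqxx ffunE. Qed.

Lemma rot_max (p : 'S_k) : (rot * p)%g ord_max = p ord0.
Proof. by rewrite permM rotE; congr (p _); apply: ord_inj; rewrite val_ordS /= eqxx. Qed.

Lemma rotV_ord0 (p : 'S_k) : (rot^-1 * p)%g ord0 = p ord_max.
Proof. by rewrite permM rotVE; congr (p _); apply: ord_inj; rewrite val_ord_pred. Qed.

Definition flip_spec d := [/\ door (flip d), flip (flip d) = d & flip d != d].

Lemma flip_ord0 y p : door (y, p, ord0) -> flip_spec (y, p, ord0).
Proof.
move=> Hd; have yn := door_ord0_lt Hd.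
have E : flip (y, p, ord0) = (raise y (p ord0), (rot * p)%g, ord_max) by rewrite /flip eqxx yn.
rewrite /flip_spec E; split; last by apply/eqP => -[_ _].
- apply: (door_transport (f := fun i => inord i.-1)) Hd => i i0.
  have i0' : 0 < i by rewrite lt0n.
  have ik := ltn_ord i.
  rewrite inord_neq_max; last by lia.
  rewrite kuhn_vertex_raise ?inord_neq_max //; last by lia.
  by split => //; rewrite inordK ?prednK ?inord_val //; lia.
- rewrite /flip (_ : ord_max == ord0 = false) // eqxx rot_max ffunE eqxx inordK; last by lia.
  by rewrite addn1 /= lower_raise // mulgA mulVg mul1g.
Qed.

Lemma flip_ord_max y p : door (y, p, ord_max) -> (y, p, ord_max) != start ->
  flip_spec (y, p, ord_max).
Proof.
move=> Hd nstart.
have yn : 0 < y (p ord_max).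
  rewrite lt0n; apply: contra nstart => /eqP y0.
  by have [-> ->] := door_max_start Hd y0.
have E : flip (y, p, ord_max) = (lower y (p ord_max), (rot^-1 * p)%g, ord0).
  by rewrite /flip (_ : ord_max == ord0 = false) // eqxx yn.
rewrite /flip_spec E; split; last by apply/eqP => -[_ _].
- apply: (door_transport (f := fun i => inord i.+1)) Hd => i im.
  have im' : nat_of_ord i != k by [].
  have ik := ltn_ord i.
  split; first by apply/eqP => /(congr1 val) /=; rewrite inordK; lia.
  rewrite kuhn_vertex_lower //; last by apply/eqP => /(congr1 val) /=; rewrite inordK; lia.
  by rewrite inordK ?inord_val //; lia.
- rewrite /flip eqxx rotV_ord0 ffunE eqxx inordK; last first.
    by rewrite ltnS; apply: leq_trans (leq_subr _ _) _; rewrite -ltnS.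
  have -> : y (p ord_max) - true < n.
    by rewrite subn1 -ltnS prednK //; exact: ltn_ord.
  by rewrite raise_lower // mulgA mulgV mul1g.
Qed.

Lemma flip_inner y p j : door (y, p, j) -> j != ord0 -> j != ord_max -> flip_spec (y, p, j).
Proof.
move=> Hd j0 jm.
have jk : 0 < j < k.
  have := ltn_ord j; have : nat_of_ord j != 0 by []; have : nat_of_ord j != k by [].
  by move=> *; apply/andP; split; lia.
have E : flip (y, p, j) = (y, (tperm (inord j.-1) (inord j) * p)%g, j).
  by rewrite /flip (negbTE j0) (negbTE jm).
rewrite /flip_spec E; split.
- by apply: (door_transport (f := id)) Hd => i ij; rewrite ij kuhn_vertex_tperm.
- by rewrite /flip (negbTE j0) (negbTE jm) mulgA tperm2 mul1g.
- apply/eqP => -[e].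
  have t1 : tperm (inord j.-1) (inord j) = 1%g :> 'S_k by apply: (mulIg p); rewrite e mul1g.
  have := congr1 (fun q : 'S_k => q (inord j.-1)) t1.
  by rewrite /= tpermL perm1 => /(congr1 val) /=; rewrite !inordK; lia.
Qed.

Lemma doors_odd : odd #|doors|.
Proof.
rewrite (cardsD1 start) inE door_start add1n /=.
have flipP d : d \in doors :\ start -> flip_spec d.
  case: d => [[y p] j]; rewrite in_setD1 inE => /andP [nstart Hd].
  have [ej|j0] := eqVneq j ord0; first by rewrite ej in Hd *; apply: flip_ord0.
  have [ej|jm] := eqVneq j ord_max; first by rewrite ej in Hd nstart *; apply: flip_ord_max.
  exact: flip_inner.
apply: (@fixfree_involution_card_even _ flip) => d dD; have [H1 H2 H3] := flipP d dD => //.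
rewrite in_setD1 inE H1 andbT; apply: contra H3 => /eqP e.
by move: dD; rewrite -H2 e flip_start in_setD1 eqxx.
Qed.

Theorem sperner : exists y p, fully_labelled y p.
Proof.
apply: NNPP => nf; have := doors_even (fun y p full => nf (ex_intro _ y (ex_intro _ p full))).
by rewrite doors_odd.
Qed.

End Sperner.


(** * The lower bound *)

Section LowerBound.
Variables (m : nat) (V : PN -> (Lomega -> Prop) -> Prop) (N : nat).
Local Notation k := m.+1.
Local Notation Pt := {ffun 'I_k -> nat}.

Hypothesis V_small : forall i, List.In i (colours k) -> forall A, V i A ->
  forall x y, A x -> A y -> Rlt (dLomega x y) (INR N).
Hypothesis V_disjoint :
  forall i, List.In i (colours k) -> r_disjoint dLomega (INR (proj1_sig i)) (V i).
Hypothesis V_cover : forall x, exists i, List.In i (colours k) /\ exists U, V i U /\ U x.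

Definition grid (x : Pt) : Lomega := grid_point m (fun c => x (inord c)).

Definition colour_of (x : Pt) : PN :=
  proj1_sig (constructive_indefinite_description _ (V_cover (grid x))).

Lemma colour_ofP x :
  List.In (colour_of x) (colours k) /\ exists U, V (colour_of x) U /\ U (grid x).
Proof. exact: proj2_sig (constructive_indefinite_description _ (V_cover (grid x))). Qed.

Definition set_of (x : Pt) : Lomega -> Prop :=
  proj1_sig (constructive_indefinite_description _ (proj2 (colour_ofP x))).

Lemma set_ofP x : V (colour_of x) (set_of x) /\ set_of x (grid x).
Proof. exact: proj2_sig (constructive_indefinite_description _ (proj2 (colour_ofP x))). Qed.

Definition col (x : Pt) : nat := proj1_sig (colour_of x) - 2 * k.

Lemma col_range x : 0 < col x <= k.
Proof. by have /In_colours [/ltP h1 /leP h2] := proj1 (colour_ofP x); rewrite /col; lia. Qed.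

Lemma colour_of_inj x x' : col x = col x' -> colour_of x = colour_of x'.
Proof.
move=> e; apply: PN_inj; move: e; rewrite /col.
have /In_colours [/ltP h1 /leP h2] := proj1 (colour_ofP x).
by have /In_colours [/ltP h3 /leP h4] := proj1 (colour_ofP x'); lia.
Qed.

Definition touches_facet (x : Pt) : Prop :=
  exists w : Pt, w (inord (col x).-1) = 1 /\ set_of x (grid w).

Definition label (x : Pt) : nat :=
  if [exists c, x c == 0] then (first_zero x).+1
  else if excluded_middle_informative (touches_facet x) then col x else 0.

Lemma label_le x : label x <= k.
Proof.
rewrite /label; case: ifPn => [/existsP [c /eqP e]|_]; first exact: first_zero_lt e.
case: (excluded_middle_informative (touches_facet x)) => [_|_] //=.
by case/andP: (col_range x).
Qed.

Lemma label_zero (x : Pt) c : x c = 0 -> label x = (first_zero x).+1.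
Proof.
move=> e; rewrite /label (_ : [exists c, x c == 0] = true) //.
by apply/existsP; exists c; apply/eqP.
Qed.

Lemma dist_grid_ge (x w : Pt) (c : 'I_k) :
  Rle (INR (k * (x c - w c))) (dLomega (grid x) (grid w)).
Proof.
rewrite /dLomega /= INR_IZR_INZ; apply: IZR_le.
apply: Z.le_trans _ (dinf_grid_ge _ _ _ _ (ltP (ltn_ord c))).
by rewrite !inord_val; nia.
Qed.

Lemma label_top (x : Pt) (c : 'I_k) : x c = N.+1 -> label x != c.+1.
Proof.
move=> e; rewrite /label; case: ifPn => [/existsP [c' /eqP e']|_].
  by apply/eqP => -[ef]; have := first_zeroP e'; rewrite ef inord_val e.
case: (excluded_middle_informative (touches_facet x)) => [[w [w1 Uw]]|_] /=; last by [].
apply/eqP => ecol; rewrite ecol /= inord_val in w1.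
have Hd := V_small (proj1 (colour_ofP x)) (proj1 (set_ofP x)) (proj2 (set_ofP x)) Uw.
have := dist_grid_ge x w c; rewrite e w1 subSS subn0 => Hge.
have : Rle (INR N) (INR (k * N)) by apply: le_INR; apply/leP; rewrite leq_pmull.
lra.
Qed.

Lemma set_of_near (x x' : Pt) : colour_of x = colour_of x' ->
  (forall c, x c <= x' c + 1 /\ x' c <= x c + 1) -> set_of x = set_of x'.
Proof.
move=> ecol near; apply: NNPP => ne.
have [Vx gx] := set_ofP x; have [Vx' gx'] := set_ofP x'; rewrite ecol in Vx.
have := V_disjoint (proj1 (colour_ofP x')) Vx Vx' ne gx gx'.
have Hle : (dinf (proj1_sig (grid x)) (proj1_sig (grid x')) <= Z.of_nat k)%Z.
  by apply: dinf_grid_le => c _; have [h1 h2] := near (inord c); split; apply/leP.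
move/IZR_le: Hle; rewrite /dLomega INR_IZR_INZ => Hle Hge.
have /In_colours [/ltP h _] := proj1 (colour_ofP x').
have : Rlt (INR k) (INR (proj1_sig (colour_of x'))) by apply: lt_INR; lia.
rewrite !INR_IZR_INZ; lra.
Qed.

Lemma no_fully_labelled (y : {ffun 'I_k -> 'I_N.+1}) p : ~ fully_labelled label y p.
Proof.
move=> full.
have near i i' c : kuhn_vertex y p i c <= kuhn_vertex y p i' c + 1 /\
                   kuhn_vertex y p i' c <= kuhn_vertex y p i c + 1.
  by split; apply: kuhn_vertex_near.
have [i0 Hi0] := full ord0; set z := kuhn_vertex y p i0 in Hi0.
have nz : ~~ [exists c, z c == 0] by apply/negP => hz; move: Hi0; rewrite /label hz.
have z_off_facet : ~ touches_facet z.
  move=> hP; move: Hi0; rewrite /label (negbTE nz).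
  case: (excluded_middle_informative (touches_facet z)) => // _ /= e.
  by have := col_range z; rewrite e.
have z_pos c : 0 < z c.
  by rewrite lt0n; apply: contraNN nz => /eqP e; apply/existsP; exists c; rewrite e.
have cz := col_range z.
have [i1 Hi1] := full (inord (col z)); rewrite inordK in Hi1; last by lia.
set y' := kuhn_vertex y p i1 in Hi1.
case: (boolP [exists c, y' c == 0]) => [/existsP [c /eqP e]|fr].
  have ef : first_zero y' = (col z).-1 by move: Hi1; rewrite (label_zero e); lia.
  apply: z_off_facet; exists z; split; last exact: (proj2 (set_ofP z)).
  have := first_zeroP e; rewrite ef => e0.
  have := proj1 (near i0 i1 (inord (col z).-1)); rewrite -/z -/y' e0.
  by have := z_pos (inord (col z).-1); lia.
move: Hi1; rewrite /label (negbTE fr).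
case: (excluded_middle_informative (touches_facet y')) => [hP|_] /= ecol; last by lia.
have [w [w1 Uw]] := hP.
have ec := colour_of_inj (esym ecol).
apply: z_off_facet; exists w; split; first by rewrite -ecol.
by rewrite (set_of_near ec (near i0 i1)).
Qed.

Lemma colours_not_cover : False.
Proof. by have [y [p]] := sperner label_le label_zero label_top; apply: no_fully_labelled. Qed.

End LowerBound.

Lemma Aset_colours (m : nat) : Aset dLomega (fun x => List.In x (colours m.+1)).
Proof.
split.
  split; first by exists (colours m.+1).
  exists (mkPN (2 * m.+1 + 0)); apply/List.in_map_iff; exists 0; split => //.
  by apply/List.in_seq; split; apply/leP.
move=> [V [HV Hcov]].
have [C HC] := uniformly_bounded_list _ _ _ (fun i Hi => proj1 (HV i Hi)).
have [N HN] := INR_unbounded C.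
apply: (@colours_not_cover m V N) => [i Hi A HA x y Hx Hy||//].
  by have := HC i Hi A HA x y Hx Hy; lra.
by move=> i Hi; case: (HV i Hi).
Qed.

Theorem theorem2 : trasdim_eq_omega dLomega.
Proof.
split; first exact: Lomega_unbounded.
split; first exact: Mpt_Aset_OrdLe.
move=> [n Hn].
exact: not_OrdLe_of_size (NoDup_colours n.+1) (length_colours n.+1) (Aset_colours n) Hn.
Qed.
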